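(* Let $\mathsf{V}$ be a semilinear variety of pointed residuated lattices. Then for every quantifier-free $\mathcal{L}$-formula $\chi$, $\mathsf{V}_\rhd\models\chi$ if and only if $\mathsf{V}\models\chi$.
   Context: $\mathcal{L}=\{\wedge,\vee,\cdot,\backslash,/,\mathrm{e},0\}$. A pointed residuated lattice is an $\mathcal{L}$-algebra with $\langle A,\wedge,\vee\rangle$ a lattice (order $\le$), $\langle A,\cdot,\mathrm{e}\rangle$ a monoid, $0$ a constant, and $b\le a\backslash c\iff a\cdot b\le c\iff a\le c/b$. For a variety $\mathsf{V}$ of pointed residuated lattices, $\mathsf{V}^c$ is the class of its linearly ordered members; $\mathsf{V}$ is semilinear if it consists of the isomorphic copies of subalgebras of products of members of $\mathsf{V}^c$. $\mathsf{V}_\rhd$ is the variety, in the language $\mathcal{L}$ plus a binary symbol $\rhd$, generated by the members of $\mathsf{V}^c$ expanded with $x\rhd y:=y$ if $\mathrm{e}\le x$ and $x\rhd y:=\mathrm{e}$ otherwise. $\mathsf{K}\models\chi$ means every member of $\mathsf{K}$ satisfies $\chi$ under every assignment. *)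

Record LAlg := {
  car :> Type;
  a_meet : car -> car -> car;
  a_join : car -> car -> car;
  a_mul  : car -> car -> car;
  a_ldiv : car -> car -> car;   (* a_ldiv a c = a \ c *)
  a_rdiv : car -> car -> car;   (* a_rdiv c b = c / b *)
  a_e    : car;
  a_zero : car }.

Arguments a_meet {_}. Arguments a_join {_}. Arguments a_mul {_}.
Arguments a_ldiv {_}. Arguments a_rdiv {_}. Arguments a_e {_}. Arguments a_zero {_}.

Definition le (A : LAlg) (x y : A) : Prop := a_meet x y = x.

Definition isPRL (A : LAlg) : Prop :=
  (forall x y z : A, a_meet x (a_meet y z) = a_meet (a_meet x y) z) /\
  (forall x y z : A, a_join x (a_join y z) = a_join (a_join x y) z) /\
  (forall x y : A, a_meet x y = a_meet y x) /\
  (forall x y : A, a_join x y = a_join y x) /\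
  (forall x y : A, a_meet x (a_join x y) = x) /\
  (forall x y : A, a_join x (a_meet x y) = x) /\
  (forall x y z : A, a_mul x (a_mul y z) = a_mul (a_mul x y) z) /\
  (forall x : A, a_mul a_e x = x) /\
  (forall x : A, a_mul x a_e = x) /\
  (forall a b c : A,
      (le A b (a_ldiv a c) <-> le A (a_mul a b) c) /\
      (le A (a_mul a b) c <-> le A a (a_rdiv c b))).

Definition isChain (A : LAlg) : Prop := forall x y : A, le A x y \/ le A y x.

Record LTAlg := { red :> LAlg; a_tri : car red -> car red -> car red }.

Inductive term : Type :=
| TVar : nat -> term
| TMeet : term -> term -> term
| TJoin : term -> term -> term
| TMul : term -> term -> term
| TLdiv : term -> term -> term
| TRdiv : term -> term -> term
| TE : term
| TZero : term.

Inductive termT : Type :=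
| UVar : nat -> termT
| UMeet : termT -> termT -> termT
| UJoin : termT -> termT -> termT
| UMul : termT -> termT -> termT
| ULdiv : termT -> termT -> termT
| URdiv : termT -> termT -> termT
| UE : termT
| UZero : termT
| UTri : termT -> termT -> termT.

Fixpoint eval (A : LAlg) (v : nat -> car A) (t : term) : car A :=
  match t with
  | TVar n => v n
  | TMeet s u => a_meet (eval A v s) (eval A v u)
  | TJoin s u => a_join (eval A v s) (eval A v u)
  | TMul s u => a_mul (eval A v s) (eval A v u)
  | TLdiv s u => a_ldiv (eval A v s) (eval A v u)
  | TRdiv s u => a_rdiv (eval A v s) (eval A v u)
  | TE => a_e
  | TZero => a_zero
  end.

Fixpoint evalT (B : LTAlg) (v : nat -> car (red B)) (t : termT) : car (red B) :=
  match t with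
  | UVar n => v n
  | UMeet s u => a_meet (evalT B v s) (evalT B v u)
  | UJoin s u => a_join (evalT B v s) (evalT B v u)
  | UMul s u => a_mul (evalT B v s) (evalT B v u)
  | ULdiv s u => a_ldiv (evalT B v s) (evalT B v u)
  | URdiv s u => a_rdiv (evalT B v s) (evalT B v u)
  | UE => a_e
  | UZero => a_zero
  | UTri s u => a_tri B (evalT B v s) (evalT B v u)
  end.

Inductive form : Type :=
| FEq : term -> term -> form
| FTrue : form
| FFalse : form
| FNot : form -> form
| FAnd : form -> form -> form
| FOr : form -> form -> form
| FImp : form -> form -> form.

Fixpoint holds (A : LAlg) (v : nat -> car A) (f : form) : Prop :=
  match f with
  | FEq s t => eval A v s = eval A v t
  | FTrue => True
  | FFalse => False
  | FNot g => ~ holds A v g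
  | FAnd g h => holds A v g /\ holds A v h
  | FOr g h => holds A v g \/ holds A v h
  | FImp g h => holds A v g -> holds A v h
  end.

Definition models (K : LAlg -> Prop) (chi : form) : Prop :=
  forall A, K A -> forall v : nat -> car A, holds A v chi.

Definition variety_PRL (V : LAlg -> Prop) : Prop :=
  exists Sigma : term -> term -> Prop,
    forall A : LAlg, V A <->
      (isPRL A /\ forall s t, Sigma s t -> forall v : nat -> car A, eval A v s = eval A v t).

Definition chains (V : LAlg -> Prop) (A : LAlg) : Prop := V A /\ isChain A.

Definition is_hom (A B : LAlg) (h : car A -> car B) : Prop :=
  (forall x y, h (a_meet x y) = a_meet (h x) (h y)) /\
  (forall x y, h (a_join x y) = a_join (h x) (h y)) /\
  (forall x y, h (a_mul x y) = a_mul (h x) (h y)) /\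
  (forall x y, h (a_ldiv x y) = a_ldiv (h x) (h y)) /\
  (forall x y, h (a_rdiv x y) = a_rdiv (h x) (h y)) /\
  h a_e = a_e /\ h a_zero = a_zero.

Definition prodAlg (I : Type) (F : I -> LAlg) : LAlg := {|
  car := forall i, car (F i);
  a_meet := fun x y i => a_meet (x i) (y i);
  a_join := fun x y i => a_join (x i) (y i);
  a_mul := fun x y i => a_mul (x i) (y i);
  a_ldiv := fun x y i => a_ldiv (x i) (y i);
  a_rdiv := fun x y i => a_rdiv (x i) (y i);
  a_e := fun i => a_e;
  a_zero := fun i => a_zero |}.

(* V is semilinear: V consists of the isomorphic copies of subalgebras of
   products of members of V^c (= the algebras admitting an embedding,
   i.e. an injective homomorphism, into such a product). *)
Definition semilinear (V : LAlg -> Prop) : Prop :=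
  forall A : LAlg, V A <->
    exists (I : Type) (F : I -> LAlg) (h : car A -> car (prodAlg I F)),
      (forall i, chains V (F i)) /\
      (forall x y, h x = h y -> x = y) /\
      is_hom A (prodAlg I F) h.

Definition expanded_chain (V : LAlg -> Prop) (C : LTAlg) : Prop :=
  chains V (red C) /\
  forall x y : car (red C),
    (le (red C) a_e x -> a_tri C x y = y) /\
    (~ le (red C) a_e x -> a_tri C x y = a_e).

(* V_rhd : the variety generated by the expanded chains, i.e. the class of
   all L_rhd-algebras satisfying every L_rhd-equation valid in all
   expanded members of V^c (Birkhoff: HSP(K) = Mod(Id(K))). *)
Definition Vrhd (V : LAlg -> Prop) (B : LTAlg) : Prop :=
  forall s t : termT,
    (forall C, expanded_chain V C -> forall v : nat -> car (red C), evalT C v s = evalT C v t) ->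
    forall v : nat -> car (red B), evalT B v s = evalT B v t.

Definition modelsT (V : LAlg -> Prop) (chi : form) : Prop :=
  forall B : LTAlg, Vrhd V B -> forall v : nat -> car (red B), holds (red B) v chi.

From Stdlib Require Import ClassicalEpsilon FunctionalExtensionality.

(* The L-reduct of every member of V_▷ lies in V: it satisfies each L-equation
   valid in V, because such an equation is valid in the expanded chains, and V
   is an equational class since residuation is captured by four identities.
   Conversely, by semilinearity each A in V embeds into a product of chains of
   V; expanding every factor by ▷ coordinatewise puts that product in V_▷, and
   quantifier-free formulas are reflected along embeddings. *)

Fixpoint term_to_termT (t : term) : termT :=
  match t with
  | TVar n => UVar n
  | TMeet s u => UMeet (term_to_termT s) (term_to_termT u)
  | TJoin s u => UJoin (term_to_termT s) (term_to_termT u)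
  | TMul s u => UMul (term_to_termT s) (term_to_termT u)
  | TLdiv s u => ULdiv (term_to_termT s) (term_to_termT u)
  | TRdiv s u => URdiv (term_to_termT s) (term_to_termT u)
  | TE => UE
  | TZero => UZero
  end.

Lemma evalT_term_to_termT (B : LTAlg) v t :
  evalT B v (term_to_termT t) = eval (red B) v t.
Proof. induction t; simpl; congruence. Qed.

Lemma eval_hom (A B : LAlg) (h : car A -> car B) : is_hom A B h ->
  forall v t, h (eval A v t) = eval B (fun n => h (v n)) t.
Proof.
  intros (Hmeet & Hjoin & Hmul & Hldiv & Hrdiv & He & Hzero) v t.
  induction t; simpl; rewrite ?Hmeet, ?Hjoin, ?Hmul, ?Hldiv, ?Hrdiv, ?He, ?Hzero;
    congruence.
Qed.

Lemma holds_embedding (A B : LAlg) (h : car A -> car B) : is_hom A B h ->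
  (forall x y, h x = h y -> x = y) ->
  forall v f, holds A v f <-> holds B (fun n => h (v n)) f.
Proof.
  intros Hh Hinj v f; induction f; simpl; try tauto.
  rewrite <- !(eval_hom _ _ _ Hh); split; [congruence | auto].
Qed.

Section ResiduatedLatticeFacts.
Variable A : LAlg.
Hypothesis HA : isPRL A.

Lemma meet_idem (x : A) : a_meet x x = x.
Proof.
  destruct HA as (_ & _ & _ & _ & meet_join & join_meet & _).
  rewrite <- (join_meet x x) at 2; apply meet_join.
Qed.

Lemma le_meet_r (x y : A) : le A (a_meet x y) y.
Proof.
  destruct HA as (meetA & _); unfold le.
  rewrite <- meetA, meet_idem; reflexivity.
Qed.

Lemma le_join_r (x y : A) : le A y (a_join x y).
Proof.
  destruct HA as (_ & _ & _ & joinC & meet_join & _); unfold le.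
  rewrite joinC; apply meet_join.
Qed.

Let residuation (a b c : A) :
  (le A b (a_ldiv a c) <-> le A (a_mul a b) c) /\
  (le A (a_mul a b) c <-> le A a (a_rdiv c b)).
Proof. apply HA. Qed.

Lemma mul_meet_ldiv_le (a b c : A) : le A (a_mul a (a_meet b (a_ldiv a c))) c.
Proof. apply (proj1 (residuation a _ c)), le_meet_r. Qed.

Lemma le_ldiv_join_mul (a b c : A) : le A b (a_ldiv a (a_join c (a_mul a b))).
Proof. apply (proj1 (residuation a b _)), le_join_r. Qed.

Lemma mul_meet_rdiv_le (a b c : A) : le A (a_mul (a_meet a (a_rdiv c b)) b) c.
Proof. apply (proj2 (residuation _ b c)), le_meet_r. Qed.

Lemma le_rdiv_join_mul (a b c : A) : le A a (a_rdiv (a_join c (a_mul a b)) b).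
Proof. apply (proj2 (residuation a b _)), le_join_r. Qed.

End ResiduatedLatticeFacts.

Local Notation X := (TVar 0).
Local Notation Y := (TVar 1).
Local Notation Z := (TVar 2).

(* An equational basis of pointed residuated lattices: the last four identities
   replace the residuation quasi-identities, since b <= a\c and ab <= c each
   turn one of them into the corresponding implication. *)
Inductive prl_identity : term -> term -> Prop :=
| prl_meetA : prl_identity (TMeet X (TMeet Y Z)) (TMeet (TMeet X Y) Z)
| prl_joinA : prl_identity (TJoin X (TJoin Y Z)) (TJoin (TJoin X Y) Z)
| prl_meetC : prl_identity (TMeet X Y) (TMeet Y X)
| prl_joinC : prl_identity (TJoin X Y) (TJoin Y X)
| prl_meetKU : prl_identity (TMeet X (TJoin X Y)) X
| prl_joinKI : prl_identity (TJoin X (TMeet X Y)) X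
| prl_mulA : prl_identity (TMul X (TMul Y Z)) (TMul (TMul X Y) Z)
| prl_mul1l : prl_identity (TMul TE X) X
| prl_mul1r : prl_identity (TMul X TE) X
| prl_mul_meet_ldiv :
    prl_identity (TMeet (TMul X (TMeet Y (TLdiv X Z))) Z) (TMul X (TMeet Y (TLdiv X Z)))
| prl_ldiv_join_mul : prl_identity (TMeet Y (TLdiv X (TJoin Z (TMul X Y)))) Y
| prl_mul_meet_rdiv :
    prl_identity (TMeet (TMul (TMeet X (TRdiv Z Y)) Y) Z) (TMul (TMeet X (TRdiv Z Y)) Y)
| prl_rdiv_join_mul : prl_identity (TMeet X (TRdiv (TJoin Z (TMul X Y)) Y)) X.

Definition assign3 {T : Type} (x y z : T) (n : nat) : T :=
  match n with 0 => x | 1 => y | _ => z end.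

Lemma isPRL_identities (A : LAlg) : isPRL A ->
  forall s t, prl_identity s t -> forall v, eval A v s = eval A v t.
Proof.
  intros HA s t Hst v.
  pose proof HA as (? & ? & ? & ? & ? & ? & ? & ? & ? & _).
  destruct Hst; simpl; auto.
  - apply mul_meet_ldiv_le; assumption.
  - apply le_ldiv_join_mul; assumption.
  - apply mul_meet_rdiv_le; assumption.
  - apply le_rdiv_join_mul; assumption.
Qed.

Lemma identities_isPRL (A : LAlg) :
  (forall s t, prl_identity s t -> forall v, eval A v s = eval A v t) -> isPRL A.
Proof.
  intros H.
  assert (Hid : forall s t, prl_identity s t ->
            forall x y z : A, eval A (assign3 x y z) s = eval A (assign3 x y z) t)
    by (intros s t Hst x y z; apply H, Hst).
  assert (meetC : forall x y : A, a_meet x y = a_meet y x)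
    by (intros x y; apply (Hid _ _ prl_meetC x y x)).
  assert (joinKI : forall x y : A, a_join x (a_meet x y) = x)
    by (intros x y; apply (Hid _ _ prl_joinKI x y x)).
  assert (join_le : forall c d : A, le A d c -> a_join c d = c)
    by (intros c d E; unfold le in E; rewrite <- E at 1; rewrite meetC; apply joinKI).
  repeat split; unfold le; intros;
    [ apply (Hid _ _ prl_meetA) | apply (Hid _ _ prl_joinA)
    | apply meetC | apply (Hid _ _ prl_joinC x y x)
    | apply (Hid _ _ prl_meetKU x y x) | apply joinKI
    | apply (Hid _ _ prl_mulA) | apply (Hid _ _ prl_mul1l x x x)
    | apply (Hid _ _ prl_mul1r x x x) | .. ].
  - match goal with E : a_meet b _ = b |- _ => rewrite <- E end.
    apply (Hid _ _ prl_mul_meet_ldiv).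
  - rewrite <- (join_le c (a_mul a b)) by assumption.
    apply (Hid _ _ prl_ldiv_join_mul).
  - rewrite <- (join_le c (a_mul a b)) by assumption.
    apply (Hid _ _ prl_rdiv_join_mul).
  - match goal with E : a_meet a _ = a |- _ => rewrite <- E end.
    apply (Hid _ _ prl_mul_meet_rdiv).
Qed.

Lemma variety_PRL_sat_closed (V : LAlg -> Prop) (A : LAlg) : variety_PRL V ->
  (forall s t, (forall A', V A' -> forall v, eval A' v s = eval A' v t) ->
     forall v, eval A v s = eval A v t) ->
  V A.
Proof.
  intros [Sigma HSigma] Hsat; apply HSigma; split.
  - apply identities_isPRL; intros s t Hst; apply Hsat.
    intros A' HA'; apply isPRL_identities; [apply HSigma, HA' | exact Hst].
  - intros s t Hst; apply Hsat.
    intros A' HA'; apply HSigma; assumption.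
Qed.

Lemma Vrhd_reduct_sat (V : LAlg -> Prop) (B : LTAlg) (s t : term) : Vrhd V B ->
  (forall A, V A -> forall v, eval A v s = eval A v t) ->
  forall v, eval (red B) v s = eval (red B) v t.
Proof.
  intros HB Hst v; rewrite <- !evalT_term_to_termT; apply HB.
  intros C [[HC _] _] w; rewrite !evalT_term_to_termT; apply Hst, HC.
Qed.

Lemma Vrhd_reduct_in_V (V : LAlg -> Prop) (B : LTAlg) :
  variety_PRL V -> Vrhd V B -> V (red B).
Proof.
  intros HV HB; apply (variety_PRL_sat_closed V _ HV).
  intros s t; apply Vrhd_reduct_sat, HB.
Qed.

Definition rhd (C : LAlg) (a b : car C) : car C :=
  if excluded_middle_informative (le C a_e a) then b else a_e.

Definition expand (C : LAlg) : LTAlg := {| red := C; a_tri := rhd C |}.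

Definition expand_prod (I : Type) (F : I -> LAlg) : LTAlg :=
  {| red := prodAlg I F; a_tri := fun x y i => rhd (F i) (x i) (y i) |}.

Lemma evalT_expand_prod I F v t i :
  evalT (expand_prod I F) v t i = evalT (expand (F i)) (fun n => v n i) t.
Proof. induction t; simpl; congruence. Qed.

Lemma expanded_chain_expand V C : chains V C -> expanded_chain V (expand C).
Proof.
  intros HC; split; [exact HC |]; intros x y; simpl; unfold rhd.
  destruct excluded_middle_informative; tauto.
Qed.

Lemma Vrhd_expand_prod V I F : (forall i, chains V (F i)) -> Vrhd V (expand_prod I F).
Proof.
  intros HF s t Hst v; apply functional_extensionality_dep; intros i.
  rewrite !evalT_expand_prod; apply (Hst (expand (F i))), expanded_chain_expand, HF.
Qed.

Theorem proposition7p1 (V : LAlg -> Prop) :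
  variety_PRL V -> semilinear V ->
  forall chi : form, modelsT V chi <-> models V chi.
Proof.
  intros HV HS chi; split.
  - intros Hchi A HA v.
    apply HS in HA as (I & F & h & Hchains & Hinj & Hh).
    apply (holds_embedding _ _ h Hh Hinj).
    exact (Hchi (expand_prod I F) (Vrhd_expand_prod V I F Hchains) _).
  - intros Hchi B HB v; apply Hchi, Vrhd_reduct_in_V; assumption.
Qed.
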